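(* Consider the $Q\times2$ coin problem below with $Q\ge12$, $C_1=40$, $C_2=64$ and budget $H>0$. If $\epsilon=\frac1{20}\sqrt{\frac{Q\delta}{H}}$, then for any algorithm $\mathrm{Alg}$, if $N_1\le\frac{Q}{4C_1\lambda^2}$, there exists a set $J\subseteq[Q]$ with $|J|\ge\frac Q6$ such that $\mathbb P_j[\hat\theta=j]\le\frac12$ for all $j\in J$.
   Context: Coin problem: constants $\delta,\lambda,\epsilon\in(0,\frac14]$ and $2Q$ coins arranged in a $Q\times2$ table (rows $1,\dots,Q$, columns $1,2$), one coin per cell. There is an unknown special row $\theta\in[Q]$. In column 1 all coins are fair except the coin in row $\theta$, whose probability of heads is $\frac12+\lambda$. In column 2 all coins have probability of heads $\delta$ except the coin in row $\theta$, with probability of heads $\delta+\epsilon$. An algorithm sequentially chooses coins to flip, each choice possibly depending on previous outcomes, performs a (possibly data-dependent) total of $\tau=N_1+N_2\le H$ flips for the fixed budget $H$, where $N_1,N_2$ are the numbers of flips in column 1 and column 2, and then outputs $\hat\theta\in[Q]$. For $j\in[Q]$, $\mathbb P_j$ is the probability measure induced by the algorithm and coins when $\theta=j$. *)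

From HB Require Import structures.
From mathcomp Require Import all_boot all_order all_algebra.
From mathcomp Require Import reals.
Set Implicit Arguments. Unset Strict Implicit. Unset Printing Implicit Defensive.
Import Order.TTheory GRing.Theory Num.Theory.
Local Open Scope ring_scope.

(* Coins of the Q x 2 table: a coin is (row, column) with column encoded as a
   bool: false = column 1, true = column 2. *)
Definition coin (Q : nat) := ('I_Q * bool)%type.

(* An action of the algorithm: flip a coin (inl) or stop and output an
   estimate theta_hat (inr). *)
Definition action (Q : nat) := (coin Q + 'I_Q)%type.

(* One step of the history: the coin flipped and its outcome (true = heads). *)
Definition step (Q : nat) := (coin Q * bool)%type.

(* A (possibly randomized, adaptive) algorithm: given the history so far, a
   probability distribution over the next action. *)
Definition policy (R : realType) (Q : nat) := seq (step Q) -> action Q -> R.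

Definition valid_policy (R : realType) (Q H : nat) (pi : policy R Q) : Prop :=
  [/\ forall h a, 0 <= pi h a,
      forall h, \sum_(a : action Q) pi h a = 1
    & forall h (c : coin Q), (H <= size h)%N -> pi h (inl c) = 0].

(* Probability of heads of coin c when the special row is theta. *)
Definition heads_prob (R : realType) (Q : nat) (delta lambda eps : R)
    (theta : 'I_Q) (c : coin Q) : R :=
  if c.2 then (if c.1 == theta then delta + eps else delta)
  else (if c.1 == theta then 2^-1 + lambda else 2^-1).

Definition outcome_prob (R : realType) (Q : nat) (delta lambda eps : R)
    (theta : 'I_Q) (c : coin Q) (b : bool) : R :=
  if b then heads_prob delta lambda eps theta c
  else 1 - heads_prob delta lambda eps theta c.

Fixpoint hist_prob (R : realType) (Q : nat) (delta lambda eps : R)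
    (theta : 'I_Q) (pi : policy R Q) (past s : seq (step Q)) : R :=
  match s with
  | [::] => 1
  | st :: s' => pi past (inl st.1) * outcome_prob delta lambda eps theta st.1 st.2
                * hist_prob delta lambda eps theta pi (rcons past st) s'
  end.

Definition traj_prob (R : realType) (Q : nat) (delta lambda eps : R)
    (theta : 'I_Q) (pi : policy R Q) (s : seq (step Q)) (k : 'I_Q) : R :=
  hist_prob delta lambda eps theta pi [::] s * pi s (inr k).

Definition prob_output (R : realType) (Q H : nat) (delta lambda eps : R)
    (theta : 'I_Q) (pi : policy R Q) (k : 'I_Q) : R :=
  \sum_(n < H.+1) \sum_(s : n.-tuple (step Q))
     traj_prob delta lambda eps theta pi s k.

Definition N1 (Q : nat) (s : seq (step Q)) : nat :=
  count (fun st : step Q => ~~ st.1.2) s.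

From HB Require Import structures.
From mathcomp Require Import all_boot all_order all_algebra.
From mathcomp Require Import reals sequences exp.
From mathcomp Require Import ring lra.
Set Implicit Arguments. Unset Strict Implicit. Unset Printing Implicit Defensive.
Import Order.TTheory GRing.Theory Num.Theory.
Local Open Scope ring_scope.

(* Compare each P_j with the law P_0 of the same algorithm on the table without
   special row.  By the chain rule, sum_j KL(P_0, P_j) is the P_0-expectation of
   the per-flip divergences, each bounded by its chi-square distance: at most
   (16/3) lambda^2 per flip in column 1 and 2 eps^2 / delta per flip in column 2,
   hence at most Q/30 + Q/200 in total.  As sum_j P_0[theta_hat = j] = 1, Markov's
   inequality leaves at least Q/6 rows with P_0[theta_hat = j] <= 1/4 and
   KL(P_0, P_j) < 1/10, and for those the Donsker-Varadhan inequality forces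
   P_j[theta_hat = j] <= 1/2. *)

Lemma big_tuple0 (V : nmodType) (T : finType) (F : 0.-tuple T -> V) :
  \sum_(s : 0.-tuple T) F s = F [tuple].
Proof.
rewrite (eq_bigr (fun _ => F [tuple])) => [|s _]; last by rewrite tuple0.
by rewrite sumr_const card_tuple expn0.
Qed.

Lemma big_tupleS (V : nmodType) (T : finType) n (F : n.+1.-tuple T -> V) :
  \sum_(s : n.+1.-tuple T) F s = \sum_(x : T) \sum_(s : n.-tuple T) F [tuple of x :: s].
Proof.
rewrite pair_bigA (reindex (fun p : T * n.-tuple T => [tuple of p.1 :: p.2])) //=.
exists (fun t : n.+1.-tuple T => (thead t, behead_tuple t)).
  by move=> [x s] _; congr pair; apply: val_inj.
by move=> t _; apply: val_inj; case: t => [[|x s] //= _].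
Qed.

Lemma big_pair (V : nmodType) (A B : finType) (F : A * B -> V) :
  \sum_(x : A * B) F x = \sum_(a : A) \sum_(b : B) F (a, b).
Proof. by rewrite pair_bigA; apply: eq_bigr => -[]. Qed.

Lemma ln_le_subr1 (R : realType) (x : R) : 0 < x -> ln x <= x - 1.
Proof. by move=> x_gt0; rewrite -{1}(subrKC 1 x) le_ln1Dx // ltrBrDl; lra. Qed.

Lemma card_le_sum (R : numDomainType) (T : finType) (A : {set T}) (g : T -> R) :
  (forall j, 0 <= g j) -> (forall j, j \in A -> 1 <= g j) -> #|A|%:R <= \sum_j g j.
Proof.
move=> g_ge0 g_ge1; rewrite -sumr_const [X in _ <= X](bigID (mem A)) /= -[X in X <= _]addr0.
by apply: lerD; [apply: ler_sum => j /g_ge1 | apply: sumr_ge0].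
Qed.

Lemma mulr_gt0_factors (R : numDomainType) (x y : R) :
  0 <= x -> 0 <= y -> 0 < x * y -> 0 < x /\ 0 < y.
Proof.
rewrite !le_eqVlt => /predU1P[<-|x_gt0]; first by rewrite mul0r ltxx.
by move=> /predU1P[<-|y_gt0]; first by rewrite mulr0 ltxx.
Qed.

Lemma valid_policy_ge0 (R : realType) (Q H : nat) (pi : policy R Q) :
  valid_policy H pi -> forall h a, 0 <= pi h a.
Proof. by case. Qed.

Section Runs.
Variables (R : realType) (Q : nat) (pi : policy R Q).
Implicit Types (o : coin Q -> bool -> R) (F G : seq (step Q) -> 'I_Q -> R).
Implicit Types (h s : seq (step Q)) (d : nat).

Fixpoint path_prob o past s : R :=
  match s with
  | [::] => 1
  | st :: s' => pi past (inl st.1) * o st.1 st.2 * path_prob o (rcons past st) s'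
  end.

Lemma hist_probE delta lambda eps theta past s :
  hist_prob delta lambda eps theta pi past s =
  path_prob (outcome_prob delta lambda eps theta) past s.
Proof. by elim: s past => //= st s IH past; rewrite IH. Qed.

(* At depth [0] the flipping branch is dropped: this is the true expectation
   only for policies that must stop there, see [expect_run_martingale]. *)
Fixpoint expect_run o F d h : R :=
  \sum_(k : 'I_Q) pi h (inr k) * F h k +
  if d is d'.+1 then
    \sum_(c : coin Q) pi h (inl c) *
      \sum_(b : bool) o c b * expect_run o F d' (rcons h (c, b))
  else 0.

Lemma expect_runE o F d h :
  expect_run o F d h = \sum_(0 <= n < d.+1) \sum_(s : n.-tuple (step Q))
     path_prob o h s * \sum_(k : 'I_Q) pi (h ++ s) (inr k) * F (h ++ s) k.
Proof.
elim: d h => [|d IH] h /=.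
  by rewrite big_nat1 big_tuple0 /= cats0 mul1r addr0.
rewrite big_nat_recl // big_tuple0 /= cats0 mul1r; congr (_ + _).
under eq_bigr => n _ do rewrite big_tupleS.
rewrite exchange_big [RHS]big_pair; apply: eq_bigr => c _.
rewrite mulr_sumr; apply: eq_bigr => b _.
rewrite IH !mulr_sumr; apply: eq_bigr => n _.
rewrite !mulr_sumr; apply: eq_bigr => s _ /=.
by rewrite -cat_rcons !mulrA.
Qed.

Lemma eq_expect_run o F G d h :
  (forall h k, F h k = G h k) -> expect_run o F d h = expect_run o G d h.
Proof.
move=> eqFG; elim: d h => [|d IH] h /=.
  by congr (_ + _); apply: eq_bigr => k _; rewrite eqFG.
congr (_ + _); first by apply: eq_bigr => k _; rewrite eqFG.
by apply: eq_bigr => c _; congr (_ * _); apply: eq_bigr => b _; rewrite IH.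
Qed.

Lemma expect_run_linear o a F G d h :
  expect_run o (fun h k => a * F h k + G h k) d h =
  a * expect_run o F d h + expect_run o G d h.
Proof.
elim: d h => [|d IH] h /=.
  by rewrite !addr0 mulr_sumr -big_split /=; apply: eq_bigr => k _; rewrite mulrDr mulrCA.
rewrite mulrDr !mulr_sumr addrACA -!big_split /=; congr (_ + _).
  by apply: eq_bigr => k _; rewrite mulrDr mulrCA.
apply: eq_bigr => c _; rewrite mulrCA -mulrDr; congr (_ * _).
by rewrite mulr_sumr -big_split; apply: eq_bigr => b _ /=; rewrite IH; ring.
Qed.

Lemma expect_run_sum o (I : finType) (F : I -> seq (step Q) -> 'I_Q -> R) d h :
  expect_run o (fun h k => \sum_(i : I) F i h k) d h =
  \sum_(i : I) expect_run o (F i) d h.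
Proof.
elim: d h => [|d IH] h /=.
  under [RHS]eq_bigr do rewrite addr0.
  by rewrite addr0 exchange_big; apply: eq_bigr => k _; rewrite mulr_sumr.
rewrite big_split /=; congr (_ + _).
  by rewrite [RHS]exchange_big; apply: eq_bigr => k _; rewrite mulr_sumr.
rewrite [RHS]exchange_big; apply: eq_bigr => c _; rewrite -mulr_sumr; congr (_ * _).
by rewrite [RHS]exchange_big; apply: eq_bigr => b _; rewrite -mulr_sumr IH.
Qed.

Hypothesis pi_ge0 : forall h a, 0 <= pi h a.

Lemma path_prob_ge0 o h s : (forall c b, 0 <= o c b) -> 0 <= path_prob o h s.
Proof. by move=> o_ge0; elim: s h => [|st s IH] h /=; rewrite ?mulr_ge0. Qed.

Lemma path_prob_gt0_law o o' h s :
  (forall c b, 0 < o c b) -> (forall c b, 0 < o' c b) ->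
  0 < path_prob o h s -> 0 < path_prob o' h s.
Proof.
move=> o_gt0 o'_gt0; elim: s h => [|st s IH] h //= pos.
have o_ge0 c b : 0 <= o c b by apply: ltW.
have [pi_o_gt0 path_gt0] := mulr_gt0_factors (mulr_ge0 (pi_ge0 _ _) (o_ge0 _ _))
  (path_prob_ge0 (rcons h st) s o_ge0) pos.
have [pi_gt0 _] := mulr_gt0_factors (pi_ge0 _ _) (o_ge0 _ _) pi_o_gt0.
by rewrite !mulr_gt0 ?IH.
Qed.

Lemma ler_sum_stop F G h :
  (forall k, 0 < pi h (inr k) -> F h k <= G h k) ->
  \sum_k pi h (inr k) * F h k <= \sum_k pi h (inr k) * G h k.
Proof.
move=> leFG; apply: ler_sum => k _; have := pi_ge0 h (inr k).
by rewrite le_eqVlt => /predU1P[<-|/leFG ?]; rewrite ?mul0r // ler_wpM2l.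
Qed.

Lemma ler_expect_run o F G d h :
  (forall c b, 0 < o c b) ->
  (forall s k, (size s <= d)%N -> 0 < path_prob o h s * pi (h ++ s) (inr k) ->
      F (h ++ s) k <= G (h ++ s) k) ->
  expect_run o F d h <= expect_run o G d h.
Proof.
move=> o_gt0; elim: d h => [|d IH] h leFG /=; apply: lerD => //.
1,2: apply: ler_sum_stop => k pi_gt0; rewrite -[h]cats0;
     by apply: leFG; rewrite /= ?mul1r ?cats0.
apply: ler_sum => c _; have := pi_ge0 h (inl c).
rewrite le_eqVlt => /predU1P[<-|pi_gt0]; rewrite ?mul0r // ler_wpM2l //.
apply: ler_sum => b _; apply: ler_wpM2l; first exact: ltW.
apply: IH => s k size_s pos; rewrite cat_rcons; apply: leFG => //.
by rewrite -cat_rcons /= -!mulrA (mulr_gt0 pi_gt0 (mulr_gt0 (o_gt0 c b) pos)).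
Qed.

Definition llr o0 o1 h : R := \sum_(st <- h) ln (o0 st.1 st.2 / o1 st.1 st.2).

(* [expR (- llr o0 o1 h)] is the likelihood ratio of [h] under [o1] against [o0]. *)
Lemma expect_run_change_law o0 o1 F d h :
  (forall c b, 0 < o0 c b) -> (forall c b, 0 < o1 c b) ->
  expR (- llr o0 o1 h) * expect_run o1 F d h =
  expect_run o0 (fun h k => expR (- llr o0 o1 h) * F h k) d h.
Proof.
move=> o0_gt0 o1_gt0; elim: d h => [|d IH] h /=.
  by rewrite !addr0 mulr_sumr; apply: eq_bigr => k _; rewrite mulrCA.
rewrite mulrDr !mulr_sumr; congr (_ + _).
  by apply: eq_bigr => k _; rewrite mulrCA.
apply: eq_bigr => c _; rewrite mulrCA mulr_sumr; congr (_ * _).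
apply: eq_bigr => b _; rewrite -IH /llr -cats1 big_cat big_seq1 /= opprD expRD.
rewrite -lnV ?posrE ?divr_gt0 // invf_div lnK ?posrE ?divr_gt0 //.
by field; rewrite gt_eqF.
Qed.

End Runs.

Lemma ln3_ln2_gap (R : realType) : 10^-1 < 3 / 4 * ln (3 : R) - ln 2.
Proof.
have frac : (2 : R) ^+ 4 / 3 ^+ 3 = 16 / 27 by rewrite !exprS expr0 !mulr1; field.
have := @ln_le_subr1 R (2 ^+ 4 / 3 ^+ 3).
by rewrite ln_div ?posrE ?exprn_gt0 // !lnXn // !mulr_natl frac; lra.
Qed.

Section ValidPolicy.
Variables (R : realType) (Q : nat) (pi : policy R Q) (H : nat).
Hypothesis pi_valid : valid_policy H pi.
Implicit Types (o : coin Q -> bool -> R) (h : seq (step Q)).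

Let pi_ge0 := valid_policy_ge0 pi_valid.

Lemma sum_stop_flip h : \sum_(k : 'I_Q) pi h (inr k) + \sum_(c : coin Q) pi h (inl c) = 1.
Proof. by case: pi_valid => _ sum1 _; rewrite -(sum1 h) big_sumType addrC. Qed.

Lemma sum_stop_at_budget h : (H <= size h)%N -> \sum_(k : 'I_Q) pi h (inr k) = 1.
Proof.
move=> budget; rewrite -(sum_stop_flip h) [X in _ = _ + X]big1 ?addr0 //.
by case: pi_valid => _ _ flip0 c _; apply: flip0.
Qed.

Lemma expect_run_martingale o (D : seq (step Q) -> R) :
  (forall h c, \sum_(b : bool) o c b * D (rcons h (c, b)) = D h) ->
  forall d h, (size h + d = H)%N -> expect_run pi o (fun h _ => D h) d h = D h.
Proof.
move=> mart; elim=> [|d IH] h size_h /=.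
  by rewrite addr0 -big_distrl /= sum_stop_at_budget ?mul1r // -size_h addn0.
rewrite [X in _ + X](eq_bigr (fun c => pi h (inl c) * D h)) => [|c _]; last first.
  rewrite -[in RHS](mart h c); congr (_ * _); apply: eq_bigr => b _.
  by rewrite IH // size_rcons addSnnS.
by rewrite -!big_distrl /= -mulrDl sum_stop_flip mul1r.
Qed.

Lemma expect_run_cst o a : (forall c, \sum_(b : bool) o c b = 1) ->
  expect_run pi o (fun _ _ => a) H [::] = a.
Proof.
move=> o_sum1; apply: (expect_run_martingale (D := fun _ => a)) => // h c.
by rewrite -big_distrl /= o_sum1 mul1r.
Qed.

(* Each step's contribution minus its conditional mean is a martingale increment. *)
Lemma expect_run_compensator o (f : step Q -> R) :
  (forall c, \sum_(b : bool) o c b = 1) ->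
  expect_run pi o (fun h _ => \sum_(st <- h) f st) H [::] =
  expect_run pi o (fun h _ => \sum_(st <- h) \sum_(b : bool) o st.1 b * f (st.1, b)) H [::].
Proof.
move=> o_sum1; set g := fun c : coin Q => \sum_(b : bool) o c b * f (c, b).
set D := fun h : seq (step Q) => \sum_(st <- h) (f st - g st.1).
rewrite (eq_expect_run _ _ (G := fun h _ => 1 * D h + \sum_(st <- h) g st.1)); last first.
  by move=> h _; rewrite mul1r /D sumrB subrK.
rewrite expect_run_linear (expect_run_martingale (D := D)) //.
  by rewrite /D big_nil mulr0 add0r.
move=> h c; rewrite /D.
under eq_bigr => b _ do rewrite -cats1 big_cat big_seq1 /= mulrDr.
rewrite big_split /= -big_distrl /= o_sum1 mul1r -[RHS]addr0; congr (_ + _).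
under eq_bigr => b _ do rewrite mulrBr.
by rewrite sumrB -big_distrl /= o_sum1 mul1r subrr.
Qed.

Definition event_prob o (E : pred 'I_Q) : R := expect_run pi o (fun _ k => (E k)%:R) H [::].

Lemma event_prob_ge0 o E : (forall c b, 0 < o c b) -> (forall c, \sum_(b : bool) o c b = 1) ->
  0 <= event_prob o E.
Proof.
move=> o_gt0 o_sum1; rewrite -(expect_run_cst 0 o_sum1).
by apply: ler_expect_run => // s k _ _; apply: ler0n.
Qed.

Lemma event_prob_le1 o E : (forall c b, 0 < o c b) -> (forall c, \sum_(b : bool) o c b = 1) ->
  event_prob o E <= 1.
Proof.
move=> o_gt0 o_sum1; rewrite -(expect_run_cst 1 o_sum1).
by apply: ler_expect_run => // s k _ _; rewrite lern1 leq_b1.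
Qed.

Section TwoLaws.
Variables o0 o1 : coin Q -> bool -> R.
Hypotheses (o0_gt0 : forall c b, 0 < o0 c b) (o1_gt0 : forall c b, 0 < o1 c b).
Hypotheses (o0_sum1 : forall c, \sum_(b : bool) o0 c b = 1)
           (o1_sum1 : forall c, \sum_(b : bool) o1 c b = 1).

Definition kl : R := expect_run pi o0 (fun h _ => llr o0 o1 h) H [::].

(* Pointwise [ln x <= x - 1] at [x = r w / Z], with [r] the likelihood ratio
   and [Z] the normalising constant, integrated against the run law under [o0]. *)
Lemma donsker_varadhan w : (forall h k, 0 < w h k) -> 0 < expect_run pi o1 w H [::] ->
  expect_run pi o0 (fun h k => ln (w h k)) H [::] - ln (expect_run pi o1 w H [::]) <= kl.
Proof.
move=> w_gt0; set Z := expect_run pi o1 w H [::] => Z_gt0.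
have le_r :
    expect_run pi o0 (fun h k => (-1) * llr o0 o1 h + (1 * ln (w h k) + - ln Z)) H [::]
 <= expect_run pi o0 (fun h k => Z^-1 * (expR (- llr o0 o1 h) * w h k) + -1) H [::].
  apply: ler_expect_run => // s k _ _.
  have := ln_le_subr1 (divr_gt0 (mulr_gt0 (expR_gt0 (- llr o0 o1 s)) (w_gt0 s k)) Z_gt0).
  by rewrite ln_div ?posrE ?mulr_gt0 ?expR_gt0 // lnM ?posrE ?expR_gt0 // expRK; lra.
rewrite !expect_run_linear !expect_run_cst // in le_r.
rewrite -expect_run_change_law // [llr _ _ _]big_nil oppr0 expR0 !mul1r -/Z in le_r.
rewrite mulVf ?gt_eqF // in le_r.
rewrite /kl; lra.
Qed.

Lemma kl_ge0 : 0 <= kl.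
Proof.
have := @donsker_varadhan (fun _ _ => 1) (fun _ _ => ltr01).
rewrite (eq_expect_run _ _ (F := fun _ _ => ln 1) (G := fun _ _ => 0)) => [|h k]; last exact: ln1.
by rewrite (expect_run_cst 1 o1_sum1) (expect_run_cst 0 o0_sum1) ln1 subrr; apply.
Qed.

(* Apply [donsker_varadhan] to the weight equal to [1/3] on [E] and [1] elsewhere. *)
Lemma event_prob_le_half (E : pred 'I_Q) :
  event_prob o0 E <= 4^-1 -> kl < 10^-1 -> event_prob o1 E <= 2^-1.
Proof.
move=> p0_le kl_lt; rewrite leNgt; apply/negP => p1_gt.
have p1_le := event_prob_le1 E o1_gt0 o1_sum1.
pose w (h : seq (step Q)) (k : 'I_Q) : R := if E k then 3^-1 else 1.
have w_gt0 h k : 0 < w h k by rewrite /w; case: (E k); rewrite ?invr_gt0.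
have Z_eq : expect_run pi o1 w H [::] = - (2 / 3) * event_prob o1 E + 1.
  rewrite (eq_expect_run _ _ (G := fun _ k => - (2 / 3) * (E k)%:R + 1)).
    by rewrite expect_run_linear expect_run_cst.
  by move=> h k; rewrite /w; case: (E k) => /=; lra.
have Z_gt0 : 0 < expect_run pi o1 w H [::] by rewrite Z_eq; lra.
have := donsker_varadhan w_gt0 Z_gt0.
rewrite (eq_expect_run _ _ (F := fun h k => ln (w h k)) (G := fun _ k => ln 3^-1 * (E k)%:R + 0)).
  2: by move=> h k; rewrite /w; case: (E k); rewrite /= ?mulr1 ?mulr0 ?addr0 ?ln1.
rewrite expect_run_linear (expect_run_cst 0 o0_sum1) addr0 -/(event_prob o0 E) Z_eq.
rewrite lnV ?posrE //.
have ln3_ge0 : 0 <= ln (3 : R) by apply: ln_ge0; rewrite ler1n.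
have : ln (3 : R) * event_prob o0 E <= ln 3 * 4^-1 by rewrite ler_wpM2l.
have : ln (- (2 / 3) * event_prob o1 E + 1) < ln (2 / 3) by rewrite ltr_ln ?posrE; lra.
rewrite ln_div ?posrE //; have := ln3_ln2_gap R; lra.
Qed.

End TwoLaws.
End ValidPolicy.

Lemma bernoulli_kl_le_chi2 (R : realType) (p q : R) : 0 < p < 1 -> 0 < q < 1 ->
  p * ln (p / q) + (1 - p) * ln ((1 - p) / (1 - q)) <= (p - q) ^+ 2 / (q * (1 - q)).
Proof.
move=> /andP[p_gt0 p_lt1] /andP[q_gt0 q_lt1].
have chi2 : p * (p / q - 1) + (1 - p) * ((1 - p) / (1 - q) - 1) = (p - q) ^+ 2 / (q * (1 - q)).
  by field; rewrite !gt_eqF ?subr_gt0.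
rewrite -chi2; apply: lerD; apply: ler_wpM2l; rewrite ?subr_ge0 ?(ltW p_gt0) ?(ltW p_lt1) //;
  by apply: ln_le_subr1; rewrite divr_gt0 ?subr_gt0.
Qed.

Unset Implicit Arguments.

Section CoinProblem.
Variables (R : realType) (Q H : nat) (delta lambda eps : R) (pi : policy R Q).
Hypotheses (delta_gt0 : 0 < delta) (delta_le : delta <= 4^-1).
Hypotheses (lambda_gt0 : 0 < lambda) (lambda_le : lambda <= 4^-1).
Hypotheses (eps_gt0 : 0 < eps) (eps_le : eps <= 4^-1).
Hypothesis pi_valid : valid_policy H pi.
Let pi_ge0 := valid_policy_ge0 pi_valid.

(* [lra] does not see section hypotheses: proofs move the bounds into the goal. *)

Definition null_heads (c : coin Q) : R := if c.2 then delta else 2^-1.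

Definition null_outcome (c : coin Q) (b : bool) : R :=
  if b then null_heads c else 1 - null_heads c.

Local Notation law j := (outcome_prob delta lambda eps j).
Implicit Types (j : 'I_Q) (c : coin Q).

Lemma null_outcome_gt0 c b : 0 < null_outcome c b.
Proof.
have := delta_gt0; have := delta_le.
by case: c b => [i []] []; rewrite /null_outcome /null_heads /=; lra.
Qed.

Lemma null_outcome_sum1 c : \sum_(b : bool) null_outcome c b = 1.
Proof. by rewrite big_bool /null_outcome /= addrC subrK. Qed.

Lemma law_gt0 j c b : 0 < law j c b.
Proof.
have := delta_le; have := lambda_le; have := eps_le.
have := delta_gt0; have := lambda_gt0; have := eps_gt0.
by case: c b => [i []] []; rewrite /outcome_prob /heads_prob /=; case: (i == j); lra.
Qed.

Lemma law_sum1 j c : \sum_(b : bool) law j c b = 1.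
Proof. by rewrite big_bool /outcome_prob /= addrC subrK. Qed.

Lemma law_off_row j c b : c.1 != j -> law j c b = null_outcome c b.
Proof. by case: c => i col /= /negbTE ij; rewrite /outcome_prob /heads_prob /= ij. Qed.

Lemma prob_outputE j :
  prob_output H delta lambda eps j pi j = event_prob pi H (law j) (pred1 j).
Proof.
rewrite /event_prob expect_runE big_mkord; apply: eq_bigr => n _.
apply: eq_bigr => s _; rewrite /traj_prob hist_probE /= (bigD1 j) //= eqxx mulr1.
by rewrite big1 ?addr0 // => k /negbTE ->; rewrite mulr0.
Qed.

Definition null_output j : R := event_prob pi H null_outcome (pred1 j).

Definition null_kl j : R := kl pi H null_outcome (law j).

Lemma null_output_ge0 j : 0 <= null_output j.
Proof.
by apply: (event_prob_ge0 pi_valid _ null_outcome_gt0); exact: null_outcome_sum1.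
Qed.

Lemma null_kl_ge0 j : 0 <= null_kl j.
Proof.
apply: (kl_ge0 pi_valid null_outcome_gt0 (law_gt0 j)); [exact: null_outcome_sum1 | exact: law_sum1].
Qed.

Lemma sum_null_output : \sum_j null_output j = 1.
Proof.
rewrite -expect_run_sum (eq_expect_run _ _ (G := fun _ _ => 1)).
  exact: expect_run_cst null_outcome_sum1.
by move=> h k; rewrite (bigD1 k) //= eqxx big1 ?addr0 // => j /negbTE; rewrite eq_sym => ->.
Qed.

Definition step_kl (c : coin Q) : R :=
  \sum_(b : bool) null_outcome c b * ln (null_outcome c b / law c.1 c b).

Lemma step_kl_le c :
  step_kl c <= if c.2 then 2 * eps ^+ 2 / delta else 16 / 3 * lambda ^+ 2.
Proof.
have := delta_gt0; have := delta_le; have := lambda_gt0; have := lambda_le.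
have := eps_gt0; have := eps_le => ? ? ? ? ? ?.
case: c => i col; rewrite /step_kl big_bool /null_outcome /outcome_prob /heads_prob /= eqxx.
case: col; rewrite /null_heads /=; (apply: le_trans (bernoulli_kl_le_chi2 _ _) _; [lra | lra |]).
  have -> : delta - (delta + eps) = - eps by ring.
  have q_var : delta <= 2 * ((delta + eps) * (1 - (delta + eps))) by nra.
  rewrite sqrrN ler_pdivrMr ?mulr_gt0 ?subr_gt0; try lra.
  by rewrite mulrAC ler_pdivlMr //; have := sqr_ge0 eps; nra.
have -> : 2^-1 - (2^-1 + lambda) = - lambda by ring.
have q_var : 3 / 16 <= (2^-1 + lambda) * (1 - (2^-1 + lambda)) by nra.
rewrite sqrrN ler_pdivrMr ?mulr_gt0 ?subr_gt0; try lra.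
by have := sqr_ge0 lambda; nra.
Qed.

Lemma sum_step_kl_le s :
  \sum_(st <- s) step_kl st.1 <=
  16 / 3 * lambda ^+ 2 * (N1 s)%:R + 2 * eps ^+ 2 / delta * (size s)%:R.
Proof.
have k2_ge0 : 0 <= 2 * eps ^+ 2 / delta by rewrite divr_ge0 ?mulr_ge0 ?sqr_ge0 ?ltW.
elim: s => [|st s IH]; first by rewrite big_nil /N1 /= !mulr0 addr0.
rewrite big_cons /N1 /= -/(N1 s) -addn1 !natrD.
by have := step_kl_le st.1; case: st.1.2 => /=; lra.
Qed.

Lemma sum_null_klE :
  \sum_j null_kl j =
  expect_run pi null_outcome (fun h _ => \sum_(st <- h) step_kl st.1) H [::].
Proof.
rewrite -expect_run_sum (eq_expect_run _ _ (G := fun h _ =>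
   \sum_(st <- h) ln (null_outcome st.1 st.2 / law st.1.1 st.1 st.2))).
  exact: expect_run_compensator null_outcome_sum1.
move=> h _; rewrite /llr exchange_big; apply: eq_bigr => st _.
rewrite (bigD1 st.1.1) //= big1 ?addr0 // => j j_ne.
by rewrite law_off_row 1?eq_sym // divff ?ln1 // gt_eqF // null_outcome_gt0.
Qed.

Lemma null_support_traj s k :
  0 < path_prob pi null_outcome [::] s * pi s (inr k) ->
  0 < traj_prob delta lambda eps k pi s k.
Proof.
move=> /mulr_gt0_factors[||path_gt0 pi_gt0]; rewrite ?path_prob_ge0 ?pi_ge0 //.
  by move=> c b; apply/ltW/null_outcome_gt0.
rewrite /traj_prob hist_probE mulr_gt0 //.
exact: path_prob_gt0_law null_outcome_gt0 (law_gt0 k) path_gt0.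
Qed.

Lemma sum_null_kl_le :
  (0 < H)%N -> eps = 20^-1 * Num.sqrt (Q%:R * delta / H%:R) ->
  (forall j s k, 0 < traj_prob delta lambda eps j pi s k ->
      (N1 s)%:R <= Q%:R / (4 * 40 * lambda ^+ 2)) ->
  \sum_j null_kl j <= Q%:R * 23 / 600.
Proof.
move=> H_gt0 eps_def N1_le; have := delta_gt0; have := lambda_gt0 => ? ?.
have H_pos : (0 : R) < H%:R by rewrite ltr0n.
have col1 : 16 / 3 * lambda ^+ 2 * (Q%:R / (4 * 40 * lambda ^+ 2)) = Q%:R / 30.
  by field; rewrite gt_eqF.
have col2 : 2 * eps ^+ 2 / delta * H%:R = Q%:R / 200.
  rewrite eps_def exprMn sqr_sqrtr ?divr_ge0 ?mulr_ge0 ?ler0n ?ltW //.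
  by field; rewrite !gt_eqF.
rewrite sum_null_klE -[X in _ <= X](expect_run_cst pi_valid _ null_outcome_sum1).
apply: ler_expect_run => // [c b|s k size_s /null_support_traj /N1_le N1_s].
  exact: null_outcome_gt0.
apply: le_trans (sum_step_kl_le s) _.
have -> : Q%:R * 23 / 600 = Q%:R / 30 + Q%:R / 200 :> R by field.
rewrite -col1 -col2; apply: lerD; apply: ler_wpM2l; rewrite ?ler_nat //.
  by rewrite mulr_ge0 ?sqr_ge0 ?divr_ge0 ?ler0n.
by rewrite !divr_ge0 ?mulr_ge0 ?sqr_ge0 ?ler0n ?ltW.
Qed.

Definition good_rows : {set 'I_Q} :=
  [set j | (null_output j <= 4^-1) && (null_kl j < 10^-1)].

Lemma good_row_prob_output j :
  j \in good_rows -> prob_output H delta lambda eps j pi j <= 2^-1.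
Proof.
rewrite inE prob_outputE => /andP[].
apply: (event_prob_le_half pi_valid null_outcome_gt0 (law_gt0 j)).
  exact: null_outcome_sum1.
exact: law_sum1.
Qed.

(* Markov's inequality for [null_output] (which sums to 1) and [null_kl]. *)
Lemma card_good_rows :
  (12 <= Q)%N -> (0 < H)%N -> eps = 20^-1 * Num.sqrt (Q%:R * delta / H%:R) ->
  (forall j s k, 0 < traj_prob delta lambda eps j pi s k ->
      (N1 s)%:R <= Q%:R / (4 * 40 * lambda ^+ 2)) ->
  (Q%:R / 6 : R) <= #|good_rows|%:R.
Proof.
move=> Q_ge12 H_gt0 eps_def N1_le.
have bad : #|~: good_rows|%:R <= \sum_j (4 * null_output j + 10 * null_kl j).
  apply: card_le_sum => j; have := null_output_ge0 j; have := null_kl_ge0 j; first lra.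
  by rewrite !inE negb_and -ltNge -leNgt => ? ? /orP[] ?; lra.
rewrite big_split /= -!mulr_sumr sum_null_output in bad.
have := sum_null_kl_le H_gt0 eps_def N1_le.
have := cardsC good_rows; rewrite card_ord => /(congr1 (fun n => n%:R : R)).
rewrite natrD; have : (12 : R) <= Q%:R by rewrite ler_nat.
lra.
Qed.

End CoinProblem.

Theorem corollary3 (R : realType) (Q H : nat) (delta lambda eps : R)
    (pi : policy R Q) :
  (12 <= Q)%N -> (0 < H)%N ->
  0 < delta <= 4^-1 -> 0 < lambda <= 4^-1 -> 0 < eps <= 4^-1 ->
  eps = 20^-1 * Num.sqrt (Q%:R * delta / H%:R) ->
  valid_policy H pi ->
  (* N_1 <= Q / (4 C_1 lambda^2) with C_1 = 40, almost surely under every P_j *)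
  (forall (j : 'I_Q) (s : seq (step Q)) (k : 'I_Q),
      0 < traj_prob delta lambda eps j pi s k ->
      (N1 s)%:R <= Q%:R / (4 * 40 * lambda ^+ 2)) ->
  exists J : {set 'I_Q},
    (Q%:R / 6 : R) <= #|J|%:R /\
    forall j, j \in J -> prob_output H delta lambda eps j pi j <= 2^-1.
Proof.
move=> Q_ge12 H_gt0 /andP[delta_gt0 delta_le] /andP[lambda_gt0 lambda_le].
move=> /andP[eps_gt0 eps_le] eps_def pi_valid N1_le.
exists (good_rows R Q H delta lambda eps pi); split.
  exact: card_good_rows.
exact: good_row_prob_output.
Qed.
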